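(* Let $\mathsf{C}$ be a (strict) 2-category, let $\Delta:\mathsf{C}\to\mathsf{Cat}$ be a (strict) 2-functor, and let $\mathrm{W}$ be a Lawvere weight on $\mathsf{C}$. Then the 2-functor interleaving distance $d_{\Delta,\mathrm{W}}$ is an extended pseudometric on $\mathrm{Im}(\Delta)$ (i.e. it takes values in $[0,\infty]$, vanishes on the diagonal, is symmetric, and satisfies the triangle inequality).
   Context: $\mathsf{Cat}$ is the 2-category of small categories, functors and natural transformations. Composition of 1-morphisms is written $gf=g\circ f$. For $A\in\mathsf C_0$, $\Delta(A)$ is a small category; for $f:A\to B$, $\Delta_f:\Delta(A)\to\Delta(B)$ is a functor; for a 2-morphism $\alpha:f\Rightarrow g$, $\Delta(\alpha):\Delta_f\Rightarrow\Delta_g$ is a natural transformation with components $\Delta(\alpha)_X$; $\Delta$ preserves identities and vertical and horizontal composition. $\mathrm{Im}(\Delta)=\bigcup_{A\in\mathsf C_0}\Delta(A)_0$. A Lawvere weight on $\mathsf{C}$ is a function $\mathrm{W}$ from 1-morphisms to $\mathbb{R}\cup\{\infty\}$ with $\mathrm{W}(g)\ge0$, $\mathrm{W}(1_A)=0$, and $\mathrm{W}(gf)\le\mathrm{W}(g)+\mathrm{W}(f)$ for composable $f,g$. For $X\in\Delta(A)_0$, $Y\in\Delta(B)_0$, $g\in\mathsf C_1(B,A)$, $h\in\mathsf C_1(A,B)$, $X$ and $Y$ are $(g,h)$-interleaved if there exist morphisms $\phi:X\to\Delta_g(Y)$ in $\Delta(A)$, $\psi:Y\to\Delta_h(X)$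 in $\Delta(B)$ and 2-morphisms $\alpha:1_A\Rightarrow gh$, $\beta:1_B\Rightarrow hg$ with $\Delta_g(\psi)\circ\phi=\Delta(\alpha)_X$ and $\Delta_h(\phi)\circ\psi=\Delta(\beta)_Y$. Then $d_{\Delta,\mathrm{W}}(X,Y)=\inf\{\max\{\mathrm{W}(g),\mathrm{W}(h)\}:X,Y\ (g,h)\text{-interleaved}\}$, with $\inf\emptyset=\infty$. *)

From HB Require Import structures.
From mathcomp Require Import all_boot all_order all_algebra.
From mathcomp Require Import boolp classical_sets reals constructive_ereal ereal.
Set Implicit Arguments. Unset Strict Implicit. Unset Printing Implicit Defensive.
Import Order.TTheory GRing.Theory Num.Theory.

Definition cast2 (X : Type) (P : X -> X -> Type) (f f' g g' : X)
  (e1 : f = f') (e2 : g = g') (u : P f g) : P f' g' :=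
  eq_rect g (fun y => P f' y) (eq_rect f (fun x => P x g) u f' e1) g' e2.

Record CatData := {
  cobj :> Type;
  chom : cobj -> cobj -> Type;
  cid : forall x, chom x x;
  ccomp : forall x y z, chom y z -> chom x y -> chom x z }.
Arguments chom {c} x y.
Arguments cid {c} x.
Arguments ccomp {c x y z} g f.

Record IsCategory (C : CatData) : Prop := {
  ccomp_id_l : forall (x y : C) (f : chom x y), ccomp (cid y) f = f;
  ccomp_id_r : forall (x y : C) (f : chom x y), ccomp f (cid x) = f;
  ccomp_assoc : forall (x y z w : C) (h : chom z w) (g : chom y z) (f : chom x y),
      ccomp h (ccomp g f) = ccomp (ccomp h g) f }.

Record Category := { cdata :> CatData; cax : IsCategory cdata }.

Definition homcast (C : CatData) (x x' y y' : C) (e1 : x = x') (e2 : y = y')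
  (u : chom x y) : chom x' y' := @cast2 C (@chom C) x x' y y' e1 e2 u.

Record Functor (C D : Category) := {
  fobj :> C -> D;
  fmap : forall x y : C, chom x y -> chom (fobj x) (fobj y);
  fmap_id : forall x : C, fmap (cid x) = cid (fobj x);
  fmap_comp : forall (x y z : C) (g : chom y z) (f : chom x y),
      fmap (ccomp g f) = ccomp (fmap g) (fmap f) }.
Arguments fmap {C D} _ {x y} _.

Definition FId (C : Category) : Functor C C.
Proof.
refine {| fobj := fun x => x; fmap := fun x y f => f |}; by [].
Defined.

Definition FComp (C D E : Category) (G : Functor D E) (F : Functor C D) :
  Functor C E.
Proof.
refine {| fobj := fun x => G (F x); fmap := fun x y f => fmap G (fmap F f) |}.
- by move=> x; rewrite !fmap_id.
- by move=> x y z g f; rewrite !fmap_comp.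
Defined.

Record NatTrans (C D : Category) (F G : Functor C D) := {
  ntc :> forall x : C, chom (F x) (G x);
  ntnat : forall (x y : C) (f : chom x y),
      ccomp (ntc y) (fmap F f) = ccomp (fmap G f) (ntc x) }.

Definition NTid (C D : Category) (F : Functor C D) : NatTrans F F.
Proof.
refine {| ntc := fun x => cid (F x) |}.
by move=> x y f; rewrite (ccomp_id_l (cax D)) (ccomp_id_r (cax D)).
Defined.

Definition NTvcomp (C D : Category) (F G H : Functor C D)
  (b : NatTrans G H) (a : NatTrans F G) : NatTrans F H.
Proof.
refine {| ntc := fun x => ccomp (b x) (a x) |}.
move=> x y f.
by rewrite -(ccomp_assoc (cax D)) (ntnat a) (ccomp_assoc (cax D)) (ntnat b)
           (ccomp_assoc (cax D)).
Defined.

Definition NThcomp (C D E : Category) (F F' : Functor C D) (H H' : Functor D E)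
  (b : NatTrans H H') (a : NatTrans F F') : NatTrans (FComp H F) (FComp H' F').
Proof.
refine (@Build_NatTrans C E (FComp H F) (FComp H' F')
  (fun x => ccomp (b (F' x)) (fmap H (a x))) _).
move=> x y f /=.
rewrite -(ccomp_assoc (cax E)) -fmap_comp (ntnat a) fmap_comp.
rewrite (ccomp_assoc (cax E)) (ntnat b) -(ccomp_assoc (cax E)).
by [].
Defined.

Definition ntcast (C D : Category) (F F' G G' : Functor C D)
  (e1 : F = F') (e2 : G = G') (a : NatTrans F G) : NatTrans F' G' :=
  @cast2 (Functor C D) (@NatTrans C D) F F' G G' e1 e2 a.

Record TwoCatData := {
  tobj :> Type;
  h1 : tobj -> tobj -> Type;
  h2 : forall A B, h1 A B -> h1 A B -> Type;
  id1 : forall A, h1 A A;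
  comp1 : forall A B C, h1 B C -> h1 A B -> h1 A C;
  id2 : forall A B (f : h1 A B), h2 f f;
  vcomp : forall A B (f g h : h1 A B), h2 g h -> h2 f g -> h2 f h;
  hcomp : forall A B C (f f' : h1 A B) (g g' : h1 B C),
      h2 g g' -> h2 f f' -> h2 (comp1 g f) (comp1 g' f') }.
Arguments h1 {t} A B.
Arguments h2 {t A B} _ _.
Arguments id1 {t} A.
Arguments comp1 {t A B C} _ _.
Arguments id2 {t A B} _.
Arguments vcomp {t A B f g h} _ _.
Arguments hcomp {t A B C f f' g g'} _ _.

Record IsTwoCat (C : TwoCatData) : Prop := {
  comp1_id_l : forall (A B : C) (f : h1 A B), comp1 (id1 B) f = f;
  comp1_id_r : forall (A B : C) (f : h1 A B), comp1 f (id1 A) = f;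
  comp1_assoc : forall (A B C' D : C) (h : h1 C' D) (g : h1 B C') (f : h1 A B),
      comp1 h (comp1 g f) = comp1 (comp1 h g) f;
  vcomp_id_l : forall (A B : C) (f g : h1 A B) (a : h2 f g), vcomp (id2 g) a = a;
  vcomp_id_r : forall (A B : C) (f g : h1 A B) (a : h2 f g), vcomp a (id2 f) = a;
  vcomp_assoc : forall (A B : C) (f g h k : h1 A B)
      (c : h2 h k) (b : h2 g h) (a : h2 f g),
      vcomp c (vcomp b a) = vcomp (vcomp c b) a;
  hcomp_id2 : forall (A B C' : C) (f : h1 A B) (g : h1 B C'),
      hcomp (id2 g) (id2 f) = id2 (comp1 g f);
  interchange : forall (A B C' : C) (f f' f'' : h1 A B) (g g' g'' : h1 B C')
      (b' : h2 g' g'') (b : h2 g g') (a' : h2 f' f'') (a : h2 f f'),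
      hcomp (vcomp b' b) (vcomp a' a) = vcomp (hcomp b' a') (hcomp b a);
  hcomp_id_l : forall (A B : C) (f f' : h1 A B) (a : h2 f f'),
      @cast2 _ h2 _ _ _ _ (comp1_id_l f) (comp1_id_l f') (hcomp (id2 (id1 B)) a) = a;
  hcomp_id_r : forall (A B : C) (f f' : h1 A B) (a : h2 f f'),
      @cast2 _ h2 _ _ _ _ (comp1_id_r f) (comp1_id_r f') (hcomp a (id2 (id1 A))) = a;
  hcomp_assoc : forall (A B C' D : C) (f f' : h1 A B) (g g' : h1 B C') (h h' : h1 C' D)
      (c : h2 h h') (b : h2 g g') (a : h2 f f'),
      @cast2 _ h2 _ _ _ _ (comp1_assoc h g f) (comp1_assoc h' g' f')
        (hcomp c (hcomp b a)) = hcomp (hcomp c b) a }.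

Record TwoCat := { tcdata :> TwoCatData; tcax : IsTwoCat tcdata }.

Record TwoFunctorData (C : TwoCat) := {
  F0 :> C -> Category;
  F1 : forall A B : C, h1 A B -> Functor (F0 A) (F0 B);
  F2 : forall (A B : C) (f g : h1 A B), h2 f g -> NatTrans (F1 f) (F1 g) }.
Arguments F1 {C} _ {A B} _.
Arguments F2 {C} _ {A B f g} _.

Record IsTwoFunctor (C : TwoCat) (D : TwoFunctorData C) : Prop := {
  F1_id : forall A : C, F1 D (id1 A) = FId (D A);
  F1_comp : forall (A B C' : C) (f : h1 A B) (g : h1 B C'),
      F1 D (comp1 g f) = FComp (F1 D g) (F1 D f);
  F2_id : forall (A B : C) (f : h1 A B), F2 D (id2 f) = NTid (F1 D f);
  F2_vcomp : forall (A B : C) (f g h : h1 A B) (b : h2 g h) (a : h2 f g),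
      F2 D (vcomp b a) = NTvcomp (F2 D b) (F2 D a);
  F2_hcomp : forall (A B C' : C) (f f' : h1 A B) (g g' : h1 B C')
      (b : h2 g g') (a : h2 f f'),
      F2 D (hcomp b a)
      = ntcast (esym (F1_comp f g)) (esym (F1_comp f' g')) (NThcomp (F2 D b) (F2 D a)) }.

Record TwoFunctor (C : TwoCat) := { tfdata :> TwoFunctorData C; tfax : IsTwoFunctor tfdata }.

Local Open Scope ereal_scope.
Local Open Scope classical_set_scope.

Record lawvere_weight (R : realType) (C : TwoCat)
    (W : forall A B : C, h1 A B -> \bar R) : Prop := {
  lw_ge0 : forall (A B : C) (f : h1 A B), 0 <= W A B f;
  lw_id : forall A : C, W A A (id1 A) = 0;
  lw_comp : forall (A B C' : C) (f : h1 A B) (g : h1 B C'),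
      W A C' (comp1 g f) <= W B C' g + W A B f }.

(* X in Delta(A), Y in Delta(B), g : B -> A, h : A -> B.
   Delta(alpha)_X : Delta_{1_A}(X) -> Delta_{gh}(X) is transported along
   Delta_{1_A} = Id and Delta_{gh} = Delta_g Delta_h. *)
Definition interleaved (C : TwoCat) (D : TwoFunctor C) (A B : C)
    (X : D A) (Y : D B) (g : h1 B A) (h : h1 A B) : Prop :=
  exists (phi : chom X (F1 D g Y)) (psi : chom Y (F1 D h X))
         (al : h2 (id1 A) (comp1 g h)) (be : h2 (id1 B) (comp1 h g)),
    ccomp (fmap (F1 D g) psi) phi
      = @homcast (D A) _ X _ (F1 D g (F1 D h X))
          (f_equal (fun F : Functor (D A) (D A) => F X) (F1_id (tfax D) A))
          (f_equal (fun F : Functor (D A) (D A) => F X) (F1_comp (tfax D) h g))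
          (F2 D al X)
    /\
    ccomp (fmap (F1 D h) phi) psi
      = @homcast (D B) _ Y _ (F1 D h (F1 D g Y))
          (f_equal (fun F : Functor (D B) (D B) => F Y) (F1_id (tfax D) B))
          (f_equal (fun F : Functor (D B) (D B) => F Y) (F1_comp (tfax D) g h))
          (F2 D be Y).

Definition idist (R : realType) (C : TwoCat) (D : TwoFunctor C)
    (W : forall A B : C, h1 A B -> \bar R) (A B : C) (X : D A) (Y : D B) : \bar R :=
  ereal_inf [set r | exists (g : h1 B A) (h : h1 A B),
                       interleaved X Y g h /\ r = maxe (W B A g) (W A B h)].

(* Im(Delta) as the (disjoint) union of the object sets Delta(A)_0 *)
Definition ImDelta (C : TwoCat) (D : TwoFunctor C) : Type := {A : C & D A}.

Definition dIm (R : realType) (C : TwoCat) (D : TwoFunctor C)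
    (W : forall A B : C, h1 A B -> \bar R) (p q : ImDelta D) : \bar R :=
  idist W (projT2 p) (projT2 q).

Record ext_pseudometric (R : realType) (T : Type) (d : T -> T -> \bar R) : Prop := {
  epm_ge0 : forall x y, 0 <= d x y;
  epm_refl : forall x, d x x = 0;
  epm_sym : forall x y, d x y = d y x;
  epm_tri : forall x y z, d x z <= d x y + d y z }.
Arguments dIm {R C} D W p q.

From Pilot Require Import Defs.
From HB Require Import structures.
From mathcomp Require Import all_boot all_order all_algebra.
From mathcomp Require Import boolp classical_sets reals constructive_ereal ereal.
Set Implicit Arguments. Unset Strict Implicit. Unset Printing Implicit Defensive.
Import Order.TTheory.

(** Reflexivity is witnessed by the identity interleaving, and symmetry by
    exchanging the two halves of an interleaving.  For the triangle
    inequality, a (g, h)-interleaving (phi, psi, alpha, beta) of X and Y and a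
    (g', h')-interleaving (phi', psi', alpha', beta') of Y and Z compose to a
    (g g', h' h)-interleaving of X and Z, with 2-cells (g alpha' h) . alpha and
    (h' beta g') . beta'; the two triangle identities follow from the old ones
    and the naturality of Delta(alpha') and Delta(beta).  Subadditivity of W
    bounds the weight of the composite, and passing to infima concludes.

    Since Delta is strict only up to equalities of functors, every transport
    is rewritten as composition with an identity transported along an
    equality of objects; by proof irrelevance such an identity depends only
    on its endpoints, so these composites normalise. *)

Definition eqhom (C : CatData) (x y : C) (e : x = y) : chom x y :=
  homcast (erefl x) e (Defs.cid x).

Lemma eqhom_irr (C : CatData) (x y : C) (e e' : x = y) : eqhom e = eqhom e'.
Proof. by rewrite (Prop_irrelevance e e'). Qed.

Lemma eqhom_id (C : CatData) (x : C) (e : x = x) : eqhom e = Defs.cid x.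
Proof. by rewrite (Prop_irrelevance e (erefl x)). Qed.

Section CategoryTransport.
Variable C : Category.

Lemma comp_id_l (x y : C) (f : chom x y) : ccomp (Defs.cid y) f = f.
Proof. exact: (ccomp_id_l (cax C)). Qed.

Lemma comp_id_r (x y : C) (f : chom x y) : ccomp f (Defs.cid x) = f.
Proof. exact: (ccomp_id_r (cax C)). Qed.

Lemma compA (x y z w : C) (h : chom z w) (g : chom y z) (f : chom x y) :
  ccomp (ccomp h g) f = ccomp h (ccomp g f).
Proof. by rewrite (ccomp_assoc (cax C)). Qed.

Lemma homcastE (x x' y y' : C) (e1 : x = x') (e2 : y = y') (u : chom x y) :
  homcast e1 e2 u = ccomp (eqhom e2) (ccomp u (eqhom (esym e1))).
Proof. by case: x' / e1; case: y' / e2; rewrite /= comp_id_l comp_id_r. Qed.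

Lemma eqhom_comp (x y z : C) (e2 : y = z) (e1 : x = y) :
  ccomp (eqhom e2) (eqhom e1) = eqhom (etrans e1 e2).
Proof. by case: z / e2; case: y / e1; rewrite /= comp_id_l. Qed.

Lemma eqhom_compA (x y z w : C) (e2 : y = z) (e1 : x = y) (f : chom w x) :
  ccomp (eqhom e2) (ccomp (eqhom e1) f) = ccomp (eqhom (etrans e1 e2)) f.
Proof. by rewrite -compA eqhom_comp. Qed.

End CategoryTransport.

Lemma fmap_eqhom (C D : Category) (F : Functor C D) (x y : C) (e : x = y) :
  Defs.fmap F (eqhom e) = eqhom (f_equal F e).
Proof. by case: y / e; exact: Defs.fmap_id. Qed.

Lemma fmap_eq_functor (C D : Category) (F G : Functor C D) (e : F = G) (x y : C)
    (u : chom x y) :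
  Defs.fmap F u =
  ccomp (eqhom (esym (f_equal (fun H : Functor C D => H y) e)))
    (ccomp (Defs.fmap G u) (eqhom (f_equal (fun H : Functor C D => H x) e))).
Proof. by case: G / e; rewrite /= comp_id_l comp_id_r. Qed.

Lemma ntcastE (C D : Category) (F F' G G' : Functor C D)
    (e1 : F = F') (e2 : G = G') (a : NatTrans F G) (x : C) :
  ntcast e1 e2 a x =
  ccomp (eqhom (f_equal (fun H : Functor C D => H x) e2))
    (ccomp (a x) (eqhom (esym (f_equal (fun H : Functor C D => H x) e1)))).
Proof. by case: F' / e1; case: G' / e2; rewrite /= comp_id_l comp_id_r. Qed.

Lemma fmap_natural (C D E : Category) (H : Functor D E) (F G : Functor C D)
    (a : NatTrans F G) (x y : C) (u : chom x y) (w : E) (k : chom w (H (F x))) :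
  ccomp (Defs.fmap H (Defs.fmap G u)) (ccomp (Defs.fmap H (a x)) k) =
  ccomp (Defs.fmap H (a y)) (ccomp (Defs.fmap H (Defs.fmap F u)) k).
Proof. by rewrite -!compA -!Defs.fmap_comp (ntnat a). Qed.

Ltac simpl_eqhom :=
  repeat rewrite ?Defs.fmap_id ?Defs.fmap_comp ?fmap_eqhom ?eqhom_id
    ?comp_id_l ?compA ?eqhom_compA ?eqhom_comp.

Section TwoFunctorTransport.
Variables (C : TwoCat) (D : TwoFunctor C).

Lemma F2_cast2E (A B : C) (f f' g g' : h1 A B) (e1 : f = f') (e2 : g = g')
    (a : h2 f g) (x : D A) :
  F2 D (@cast2 _ h2 f f' g g' e1 e2 a) x =
  ccomp (eqhom (f_equal (fun k => F1 D k x) e2))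
    (ccomp (F2 D a x) (eqhom (esym (f_equal (fun k => F1 D k x) e1)))).
Proof. by case: f' / e1; case: g' / e2; rewrite /= comp_id_l comp_id_r. Qed.

Lemma F2_vcompE (A B : C) (f g h : h1 A B) (b : h2 g h) (a : h2 f g) (x : D A) :
  F2 D (vcomp b a) x = ccomp (F2 D b x) (F2 D a x).
Proof. by rewrite (F2_vcomp (tfax D)). Qed.

Lemma F2_idE (A B : C) (f : h1 A B) (x : D A) :
  F2 D (id2 f) x = Defs.cid (F1 D f x).
Proof. by rewrite (F2_id (tfax D)). Qed.

Lemma F2_hcompE (A B E : C) (f f' : h1 A B) (g g' : h1 B E)
    (b : h2 g g') (a : h2 f f') (x : D A) :
  F2 D (hcomp b a) x =
  ccomp (eqhom (f_equal (fun H : Functor (D A) (D E) => H x)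
                  (esym (F1_comp (tfax D) f' g'))))
   (ccomp (ccomp (F2 D b (F1 D f' x)) (Defs.fmap (F1 D g) (F2 D a x)))
     (eqhom (esym (f_equal (fun H : Functor (D A) (D E) => H x)
                    (esym (F1_comp (tfax D) f g)))))).
Proof. by rewrite (F2_hcomp (tfax D)) ntcastE. Qed.

Lemma F1_id_fmap (A : C) (x y : D A) (u : chom x y) :
  Defs.fmap (F1 D (id1 A)) u =
  ccomp (eqhom (esym (f_equal (fun H : Functor (D A) (D A) => H y) (F1_id (tfax D) A))))
    (ccomp u (eqhom (f_equal (fun H : Functor (D A) (D A) => H x) (F1_id (tfax D) A)))).
Proof. exact: (fmap_eq_functor (F1_id (tfax D) A)). Qed.

Lemma F1_comp_fmap (A B E : C) (f : h1 A B) (g : h1 B E) (x y : D A) (u : chom x y) :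
  Defs.fmap (F1 D g) (Defs.fmap (F1 D f) u) =
  ccomp (eqhom (esym (f_equal (fun H : Functor (D A) (D E) => H y)
                        (esym (F1_comp (tfax D) f g)))))
    (ccomp (Defs.fmap (F1 D (comp1 g f)) u)
       (eqhom (f_equal (fun H : Functor (D A) (D E) => H x)
                 (esym (F1_comp (tfax D) f g))))).
Proof. exact: (fmap_eq_functor (esym (F1_comp (tfax D) f g))). Qed.

End TwoFunctorTransport.

Section Interleavings.
Variables (C : TwoCat) (D : TwoFunctor C).

Definition half_interleaving (A B : C) (X : D A) (Y : D B) (g : h1 B A) (h : h1 A B)
    (phi : chom X (F1 D g Y)) (psi : chom Y (F1 D h X))
    (al : h2 (id1 A) (comp1 g h)) : Prop :=
  ccomp (Defs.fmap (F1 D g) psi) phi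
  = @homcast (D A) _ X _ (F1 D g (F1 D h X))
      (f_equal (fun F : Functor (D A) (D A) => F X) (F1_id (tfax D) A))
      (f_equal (fun F : Functor (D A) (D A) => F X) (F1_comp (tfax D) h g))
      (F2 D al X).

Definition kleisli_comp (A B E : C) (X : D A) (Y : D B) (Z : D E)
    (g : h1 B A) (g' : h1 E B) (phi : chom X (F1 D g Y)) (phi' : chom Y (F1 D g' Z)) :
  chom X (F1 D (comp1 g g') Z) :=
  ccomp (eqhom (esym (f_equal (fun F : Functor (D E) (D A) => F Z) (F1_comp (tfax D) g' g))))
    (ccomp (Defs.fmap (F1 D g) phi') phi).
Arguments kleisli_comp {A B E X Y Z g g'} phi phi'.

Lemma half_interleaving_comp (A B E : C) (X : D A) (Y : D B) (Z : D E)
    (g : h1 B A) (h : h1 A B) (g' : h1 E B) (h' : h1 B E)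
    (phi : chom X (F1 D g Y)) (psi : chom Y (F1 D h X)) (al : h2 (id1 A) (comp1 g h))
    (phi' : chom Y (F1 D g' Z)) (psi' : chom Z (F1 D h' Y))
    (al' : h2 (id1 B) (comp1 g' h')) :
  half_interleaving phi psi al -> half_interleaving phi' psi' al' ->
  exists al'', half_interleaving (kleisli_comp phi phi') (kleisli_comp psi' psi) al''.
Proof.
move=> triangleX triangleY.
have unit_r : comp1 (comp1 g (id1 B)) h = comp1 g h by rewrite (comp1_id_r (tcax C)).
have assoc : comp1 (comp1 g (comp1 g' h')) h = comp1 (comp1 g g') (comp1 h' h).
  by rewrite !(comp1_assoc (tcax C)).
exists (vcomp (@cast2 _ h2 _ _ _ _ unit_r assoc (hcomp (hcomp (id2 g) al') (id2 h))) al).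
rewrite /half_interleaving /kleisli_comp.
rewrite homcastE F2_vcompE F2_cast2E !F2_hcompE !F2_idE.
rewrite !(fmap_eq_functor (F1_comp (tfax D) g' g)) /=.
simpl_eqhom.
have fmap_g_compA : forall (W : D A) (k : chom W (F1 D g Y)),
  ccomp (Defs.fmap (F1 D g) (Defs.fmap (F1 D g') psi')) (ccomp (Defs.fmap (F1 D g) phi') k)
  = ccomp (Defs.fmap (F1 D g) (ccomp (Defs.fmap (F1 D g') psi') phi')) k.
  by move=> W k; rewrite Defs.fmap_comp compA.
rewrite fmap_g_compA triangleY homcastE.
simpl_eqhom.
rewrite (F1_comp_fmap h' g' psi).
simpl_eqhom.
(* naturality of Delta(alpha') *)
rewrite fmap_natural F1_id_fmap.
simpl_eqhom.
rewrite triangleX homcastE.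
simpl_eqhom.
by congr ccomp; [exact: eqhom_irr | congr ccomp; congr ccomp; exact: eqhom_irr].
Qed.

Lemma half_interleaving_id (A : C) (X : D A) (e : X = F1 D (id1 A) X) :
  exists al, half_interleaving (eqhom e) (eqhom e) al.
Proof.
exists (@cast2 _ h2 _ _ _ _ (erefl (id1 A)) (esym (comp1_id_l (tcax C) (id1 A)))
          (id2 (id1 A))).
rewrite /half_interleaving F1_id_fmap homcastE F2_cast2E F2_idE.
by simpl_eqhom; exact: eqhom_irr.
Qed.

Lemma interleaved_refl (A : C) (X : D A) : interleaved X X (id1 A) (id1 A).
Proof.
have e : X = F1 D (id1 A) X by rewrite (F1_id (tfax D)).
by have [al H] := half_interleaving_id e; exists (eqhom e), (eqhom e), al, al.
Qed.

Lemma interleaved_sym (A B : C) (X : D A) (Y : D B) g h :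
  interleaved X Y g h -> interleaved Y X h g.
Proof. by case=> phi [psi [al [be [H1 H2]]]]; exists psi, phi, be, al. Qed.

Lemma interleaved_comp (A B E : C) (X : D A) (Y : D B) (Z : D E)
    (g : h1 B A) (h : h1 A B) (g' : h1 E B) (h' : h1 B E) :
  interleaved X Y g h -> interleaved Y Z g' h' ->
  interleaved X Z (comp1 g g') (comp1 h' h).
Proof.
case=> phi [psi [al [be [H1 H2]]]] [phi' [psi' [al' [be' [H1' H2']]]]].
have [al'' H1''] := half_interleaving_comp H1 H1'.
have [be'' H2''] := half_interleaving_comp H2' H2.
by exists (kleisli_comp phi phi'), (kleisli_comp psi' psi), al'', be''.
Qed.

End Interleavings.

Local Open Scope ereal_scope.
Local Open Scope classical_set_scope.

Lemma le_adde_ereal_inf (R : realType) (c x : \bar R) (S : set \bar R) :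
  -oo < c -> -oo < ereal_inf S -> (forall b, S b -> x <= c + b) ->
  x <= c + ereal_inf S.
Proof.
case: c => [r| |] // _ infS le_x.
  by rewrite -leeBlDl //; apply/ereal_infP => b Sb; rewrite leeBlDl // le_x.
by rewrite addye ?leey // gt_eqF.
Qed.

Lemma le_ereal_infD (R : realType) (x : \bar R) (S T : set \bar R) :
  -oo < ereal_inf S -> -oo < ereal_inf T ->
  (forall a b, S a -> T b -> x <= a + b) -> x <= ereal_inf S + ereal_inf T.
Proof.
move=> infS infT le_x; apply: le_adde_ereal_inf => // b Tb.
rewrite addeC; apply: le_adde_ereal_inf => // [|a Sa].
  exact: lt_le_trans infT (ereal_inf_lbound Tb).
by rewrite addeC le_x.
Qed.

Section InterleavingDistance.
Variables (R : realType) (C : TwoCat) (D : TwoFunctor C)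
  (W : forall A B : C, h1 A B -> \bar R).
Hypothesis weightW : lawvere_weight W.

Lemma idist_ge0 (A B : C) (X : D A) (Y : D B) : 0 <= idist W X Y.
Proof.
by apply/ereal_infP => _ [g [h [_ ->]]]; rewrite le_max (lw_ge0 weightW).
Qed.

Lemma idist_self (A : C) (X : D A) : idist W X X = 0.
Proof.
apply/le_anti; rewrite idist_ge0 andbT; apply: ge_ereal_inf.
exists 0 => //; exists (id1 A), (id1 A); split; first exact: interleaved_refl.
by rewrite (lw_id weightW) maxxx.
Qed.

Lemma idist_le_sym (A B : C) (X : D A) (Y : D B) : idist W X Y <= idist W Y X.
Proof.
apply: ereal_inf_le_tmp => _ [g [h [XY ->]]].
by exists h, g; split; [exact: interleaved_sym | rewrite maxC].
Qed.

Lemma idistC (A B : C) (X : D A) (Y : D B) : idist W X Y = idist W Y X.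
Proof. by apply/le_anti; rewrite !idist_le_sym. Qed.

Lemma idist_le_comp (A B E : C) (X : D A) (Y : D B) (Z : D E)
    (g : h1 B A) (h : h1 A B) (g' : h1 E B) (h' : h1 B E) :
  interleaved X Y g h -> interleaved Y Z g' h' ->
  idist W X Z <= maxe (W g) (W h) + maxe (W g') (W h').
Proof.
move=> XY YZ; apply: ge_ereal_inf.
exists (maxe (W (comp1 g g')) (W (comp1 h' h))).
  by exists (comp1 g g'), (comp1 h' h); split; first exact: interleaved_comp XY YZ.
rewrite ge_max; apply/andP; split; apply: le_trans (lw_comp weightW _ _) _.
  by apply: leeD; rewrite le_max lexx ?orbT.
by rewrite addeC; apply: leeD; rewrite le_max lexx ?orbT.
Qed.

Lemma idist_triangle (A B E : C) (X : D A) (Y : D B) (Z : D E) :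
  idist W X Z <= idist W X Y + idist W Y Z.
Proof.
have idist_gtNy A' B' (X' : D A') (Y' : D B') : -oo < idist W X' Y'.
  exact: lt_le_trans ltNy0 (idist_ge0 X' Y').
apply: le_ereal_infD; [exact: idist_gtNy | exact: idist_gtNy |].
move=> _ _ [g [h [XY ->]]] [g' [h' [YZ ->]]].
exact: idist_le_comp XY YZ.
Qed.

End InterleavingDistance.

Theorem theorem3p16 (R : realType) (C : TwoCat) (D : TwoFunctor C)
    (W : forall A B : C, h1 A B -> \bar R) :
  lawvere_weight W -> ext_pseudometric (dIm D W).
Proof.
move=> weightW; split.
- by case=> A X [B Y]; exact: idist_ge0.
- by case=> A X; exact: idist_self.
- by case=> A X [B Y]; exact: idistC.
- by case=> A X [B Y] [E Z]; exact: idist_triangle.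
Qed.
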